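(* Let $P$ be a dcpo. The following are equivalent: (1) $\Sigma P$ is a $d^{\ast}$-space; (2) for every family $\{{\uparrow}F_d\mid d\in D\}\subseteq\mathbf{Fin}\,P$ that is filtered under inclusion, every ${\uparrow}F\in\mathbf{Fin}\,P$ and every nonempty Scott open set $U$, if $\bigcap_{d\in D}{\uparrow}F_d\cap{\uparrow}F\subseteq U$, then ${\uparrow}F_d\cap{\uparrow}F\subseteq U$ for some $d\in D$.
   Context: A dcpo is a poset in which every directed subset has a supremum. A subset $U$ of a poset $P$ is Scott open if $U={\uparrow}U$ and, for every directed $D$ whose supremum exists, $\bigvee D\in U$ implies $D\cap U\neq\emptyset$. The space $\Sigma P$ is $P$ with the Scott topology; its specialization order is the order of $P$. $\mathbf{Fin}\,P=\{{\uparrow}F\mid F\subseteq P$ nonempty finite$\}$. A family of sets is filtered if any two of its members contain a common member. All spaces are $T_0$. The specialization order of a space $X$ is given by $x\le y$ iff $x\in cl(\{y\})$. A $T_0$-space $X$ is a $d^{\ast}$-space if for every directed $D\subseteq X$ (in the specialization order), every $x\in X$ and every nonempty open $U\subseteq X$, $\bigcap_{d\in D}{\uparrow}d\cap{\uparrow}x\subseteq U$ implies ${\uparrow}d\cap{\uparrow}x\subseteq U$ for some $d\in D$. *)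

From HB Require Import structures.
From mathcomp Require Import all_boot all_order.
From mathcomp Require Import boolp classical_sets cardinality topology.
Import Order.TTheory.

Set Implicit Arguments.
Unset Strict Implicit.
Unset Printing Implicit Defensive.

Local Open Scope classical_set_scope.
Local Open Scope order_scope.

Definition directed_wrt {X : Type} (R : X -> X -> Prop) (D : set X) :=
  D !=set0 /\ forall x y, D x -> D y -> exists2 z, D z & R x z /\ R y z.

Section PosetDefs.
Context {disp : Order.disp_t} {T : porderType disp}.

Definition directed (D : set T) := directed_wrt (fun x y => x <= y) D.

Definition is_sup (D : set T) (s : T) :=
  ubound D s /\ forall u, ubound D u -> s <= u.

Definition is_dcpo := forall D : set T, directed D -> exists s, is_sup D s.

Definition upset (A : set T) : set T := [set y | exists2 x, A x & x <= y].

Definition scott_open (U : set T) :=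
  U = upset U /\
  forall (D : set T) (s : T), directed D -> is_sup D s -> U s -> D `&` U !=set0.

(** members of Fin P: ↑F with F nonempty finite *)
Definition fin_generator (F : set T) := finite_set F /\ F !=set0.

Definition filtered_family {I : Type} (A : I -> set T) :=
  inhabited I /\ forall i j, exists k, A k `<=` A i /\ A k `<=` A j.

Definition fin_dstar_condition :=
  forall (I : Type) (F : I -> set T) (G U : set T),
    (forall i, fin_generator (F i)) ->
    filtered_family (fun i => upset (F i)) ->
    fin_generator G ->
    scott_open U -> U !=set0 ->
    (\bigcap_i upset (F i)) `&` upset G `<=` U ->
    exists i, upset (F i) `&` upset G `<=` U.

Lemma scott_openT : scott_open setT.
Proof.
split; first by apply/seteqP; split=> x // _; exists x.
by move=> D s [[d Dd] _] _ _; exists d.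
Qed.

Lemma scott_openI : setI_closed scott_open.
Proof.
move=> U V [eU hU] [eV hV]; split.
  apply/seteqP; split=> [x Ux|y [x [Ux Vx] xy]]; first by exists x.
  by split; [rewrite eU; exists x | rewrite eV; exists x].
move=> D s dD sD [Us Vs].
have [a [Da Ua]] := hU D s dD sD Us.
have [b [Db Vb]] := hV D s dD sD Vs.
have [c Dc [ac bc]] := dD.2 a b Da Db.
by exists c; split=> //; split; [rewrite eU; exists a | rewrite eV; exists b].
Qed.

Lemma scott_open_bigU (I : Type) (f : I -> set T) :
  (forall i, scott_open (f i)) -> scott_open (\bigcup_i f i).
Proof.
move=> hf; split.
  apply/seteqP; split=> [x Ux|y [x [i _ fxi] xy]]; first by exists x.
  by exists i => //; rewrite (hf i).1; exists x.
move=> D s dD sD [i _ fis].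
have [d [Dd fid]] := (hf i).2 D s dD sD fis.
by exists d; split=> //; exists i.
Qed.

End PosetDefs.

Definition scott_space {disp : Order.disp_t} (T : porderType disp) : Type := T.

Section ScottTopology.
Context {disp : Order.disp_t} {T : porderType disp}.
HB.instance Definition _ := Choice.on (scott_space T).
HB.instance Definition _ :=
  isOpenTopological.Build (scott_space T)
    (@scott_openT disp T) (@scott_openI disp T) (@scott_open_bigU disp T).
End ScottTopology.

Section DStar.
Context {X : topologicalType}.

Definition spec_le (x y : X) := closure [set y] x.
Definition spec_up (x : X) : set X := [set y | spec_le x y].

Definition dstar_space :=
  @kolmogorov_space X /\
  forall (D : set X) (x : X) (U : set X),
    directed_wrt spec_le D -> open U -> U !=set0 ->
    (\bigcap_(d in D) spec_up d) `&` spec_up x `<=` U ->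
    exists2 d, D d & spec_up d `&` spec_up x `<=` U.
End DStar.

(** (1) => (2) is Rudin's lemma: a filtered family of finitely generated upper
    sets ↑F_i admits a directed set D ⊆ ⋃ F_i meeting every F_i, so that
    ⋂_{d∈D} ↑d ⊆ ⋂_i ↑F_i.  Applied to the points of F_i whose upper set,
    intersected with ↑G, escapes U, the d*-property (extended from ↑x to a
    finitely generated ↑G using directedness of D) yields a contradiction.
    (2) => (1) is the special case of singletons F_i = {d}, F = {x}, since
    the specialization order of ΣP is the order of P. *)
From HB Require Import structures.
From mathcomp Require Import all_boot all_order.
From mathcomp Require Import boolp classical_sets cardinality topology.
Import Order.TTheory.

Set Implicit Arguments.
Unset Strict Implicit.
Unset Printing Implicit Defensive.

Local Open Scope order_scope.
Local Open Scope classical_set_scope.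

Lemma Zorn_bigcap (T : Type) (P : set (set T)) :
  (forall F : set (set T), F `<=` P -> total_on F subset ->
    P (\bigcap_(X in F) X)) ->
  exists A, P A /\ forall B, B `<` A -> ~ P B.
Proof.
move=> capP.
have [B [PB Bmax]] : exists B, P (~` B) /\ forall B', B `<` B' -> ~ P (~` B').
  apply: Zorn_bigcup => F FP Ftot.
  have -> : ~` (\bigcup_(X in F) X) = \bigcap_(Y in setC @` F) Y.
    by rewrite setC_bigcup bigcap_image.
  apply: capP => [_ [X FX <-]|_ _ [X FX <-] [Y FY <-]]; first exact: FP.
  by case: (Ftot X Y FX FY) => XY; [right|left]; exact: subsetC.
exists (~` B); split=> // C [CB BC] PC; apply: (Bmax (~` C)); last by rewrite setCK.
by split; [exact: subsetCr | move=> /subsetCl].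
Qed.

Lemma directed_wrt_ub_seq (X : Type) (Y : eqType) (R : X -> X -> Prop)
    (D : set X) (Q : Y -> X -> Prop) (s : seq Y) :
  directed_wrt R D -> (forall y a b, Q y a -> R a b -> Q y b) ->
  (forall y, y \in s -> exists2 a, D a & Q y a) ->
  exists2 a, D a & forall y, y \in s -> Q y a.
Proof.
move=> [[a0 Da0] dD] Qmono; elim: s => [|y s IHs] hs; first by exists a0.
have [a Da Qa] := hs y (mem_head _ _).
have [b Db Qb] := IHs (fun z zs => hs z (mem_behead (s := y :: s) zs)).
have [c Dc [ac bc]] := dD a b Da Db.
exists c => // z; rewrite in_cons => /orP[/eqP->|zs]; first exact: Qmono ac.
exact: Qmono (Qb z zs) bc.
Qed.

Section Rudin.
Context {disp : Order.disp_t} {T : porderType disp}.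

Lemma upset1 (a z : T) : upset [set a] z <-> a <= z.
Proof. by split=> [[x -> //]|az]; exists a. Qed.

Variables (I : Type) (A : I -> set T).
Hypotheses (I0 : inhabited I) (Afin : forall i, finite_set (A i))
  (A0 : forall i, A i !=set0)
  (Afil : forall i j, exists k, A k `<=` upset (A i) /\ A k `<=` upset (A j)).

Let Ucup := \bigcup_i A i.

(* Sets that are down-closed inside [Ucup] and meet every [A i]; a minimal
   one, intersected with [Ucup], is the directed set of Rudin's lemma. *)
Let rudin_set (C : set T) :=
  (forall a b, C a -> Ucup b -> b <= a -> C b) /\ (forall i, C `&` A i !=set0).

Let rudin_set_bigcap (F : set (set T)) :
  F `<=` rudin_set -> total_on F subset -> rudin_set (\bigcap_(X in F) X).
Proof.
move=> FR Ftot; split=> [a b aF Ub ba X FX|i].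
  exact: (FR X FX).1 (aF X FX) Ub ba.
apply: contrapT => capAi.
have [s As] := (finite_seqP (A i)).1 (Afin i).
have missed y : y \in s -> exists2 X, F X & ~ X y.
  move=> ys; apply: contrapT => /forall2NP allX; apply: capAi.
  exists y; split; last by rewrite As.
  by move=> X FX; have [//|] := allX X; apply: contrapT.
have [y0 Ay0] := A0 i; have [X0 FX0 _] : exists2 X, F X & ~ X y0.
  by apply: missed; rewrite As in Ay0.
have dF : directed_wrt (fun X Y => Y `<=` X) F.
  split=> [|X Y FX FY]; first by exists X0.
  by case: (Ftot X Y FX FY) => XY; [exists X | exists Y] => //; split.
have [X FX Xs] := directed_wrt_ub_seq dF (fun y X Y nXy YX Yy => nXy (YX y Yy)) missed.
have [z [Xz Az]] := (FR X FX).2 i.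
by apply: (Xs z) => //; rewrite As in Az.
Qed.

Let minimal_rudin_set_up (C : set T) :
  rudin_set C -> (forall B, B `<` C -> ~ rudin_set B) ->
  forall x, C x -> Ucup x -> exists i, C `&` A i `<=` upset [set x].
Proof.
move=> [Cdown Cmeet] Cmin x Cx Ux; apply: contrapT => /forallNP noi.
apply: (Cmin (C `&` ~` upset [set x])).
  by split=> [y [] //|/(_ x Cx) [_]]; apply; apply/upset1.
split=> [a b [Ca nxa] Ub ba|i].
  split; first exact: Cdown Ca Ub ba.
  by move=> /upset1 xb; apply/nxa/upset1/(le_trans xb).
apply: contrapT => nmeet; apply: (noi i) => y [Cy Ay].
by apply: contrapT => nxy; apply: nmeet; exists y.
Qed.

Lemma rudin_lemma : exists D : set T,
  [/\ directed D, D `<=` \bigcup_i A i & forall i, D `&` A i !=set0].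
Proof.
have [C [[Cdown Cmeet] Cmin]] := Zorn_bigcap rudin_set_bigcap.
have Cup := minimal_rudin_set_up (conj Cdown Cmeet) Cmin.
exists (C `&` Ucup); split=> [||i]; last 2 first.
- by move=> x [].
- by have [z [Cz Az]] := Cmeet i; exists z; split=> //; split=> //; exists i.
split=> [|x y [Cx Ux] [Cy Uy]].
  by case: I0 => i; have [z [Cz Az]] := Cmeet i; exists z; split=> //; exists i.
have [i Ci] := Cup x Cx Ux; have [j Cj] := Cup y Cy Uy.
have [k [ki kj]] := Afil i j; have [z [Cz Az]] := Cmeet k.
exists z; first by split=> //; exists k.
have [a Aa az] := ki z Az; have [b Ab bz] := kj z Az.
have /upset1 xa : upset [set x] a.
  by apply: Ci; split=> //; apply: Cdown Cz _ az; exists i.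
have /upset1 yb : upset [set y] b.
  by apply: Cj; split=> //; apply: Cdown Cz _ bz; exists j.
by split; [exact: le_trans az | exact: le_trans bz].
Qed.

End Rudin.

Section ScottSpace.
Context {disp : Order.disp_t} {P : porderType disp}.

Lemma scott_open_not_le (y : P) : scott_open [set z | ~ z <= y].
Proof.
split.
  apply/seteqP; split=> [z zy|w [z zy zw] wy]; first by exists z.
  exact/zy/(le_trans zw).
move=> D s dD [_ sup_s] sy; apply: contrapT => noD; apply/sy/sup_s => d Dd.
by apply: contrapT => dy; apply: noD; exists d.
Qed.

Lemma spec_leP (x y : scott_space P) : spec_le x y <-> (x : P) <= y.
Proof.
split=> [xy|xy B].
  apply: contrapT => nxy.
  have : nbhs x [set z : scott_space P | ~ (z : P) <= y].
    by apply: open_nbhs_nbhs; split=> //; exact: scott_open_not_le.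
  by move=> /xy [z [-> /=]].
rewrite nbhsE => -[O [oO Ox] OB]; exists y; split=> //; apply: OB.
by have [-> _] : scott_open (T := P) O := oO; exists x.
Qed.

Lemma spec_upE (x : scott_space P) : spec_up x = upset (T := P) [set x].
Proof. by apply/seteqP; split=> z; rewrite /spec_up /= spec_leP upset1. Qed.

Lemma scott_space_kolmogorov : kolmogorov_space (scott_space P).
Proof.
move=> x y xy.
have [nxy|nyx] : ~ (x : P) <= y \/ ~ (y : P) <= x.
  apply: contrapT => /not_orP [/contrapT xy' /contrapT yx]; apply/(negP xy).
  by apply/eqP/le_anti; rewrite xy' yx.
- exists [set z : scott_space P | ~ (z : P) <= y]; left; split; last first.
    by apply/mem_set => /=; apply.
  by apply/mem_set/open_nbhs_nbhs; split=> //; exact: scott_open_not_le.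
- exists [set z : scott_space P | ~ (z : P) <= x]; right; split; last first.
    by apply/mem_set => /=; apply.
  by apply/mem_set/open_nbhs_nbhs; split=> //; exact: scott_open_not_le.
Qed.

Definition scott_dstar := forall (D : set P) (x : P) (U : set P),
  directed D -> scott_open U -> U !=set0 ->
  (\bigcap_(d in D) upset [set d]) `&` upset [set x] `<=` U ->
  exists2 d, D d & upset [set d] `&` upset [set x] `<=` U.

Lemma dstar_spaceE : dstar_space (X := scott_space P) <-> scott_dstar.
Proof.
have specE : @spec_up (scott_space P) = fun x : P => upset [set x].
  by apply: funext => x; rewrite spec_upE.
have dirE (D : set P) : directed_wrt (@spec_le (scott_space P)) D <-> directed D.
  rewrite /directed /directed_wrt.
  by split=> -[D0 dD]; split=> // x y Dx Dy;
    have [z Dz [xz yz]] := dD x y Dx Dy; exists z => //; rewrite ?spec_leP in xz yz *.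
rewrite /dstar_space specE; split=> [[_ ds] D x U /dirE|ds]; first exact: ds.
by split=> [|D x U /dirE]; [exact: scott_space_kolmogorov | exact: ds].
Qed.

Lemma scott_dstar_finite (D G U : set P) : scott_dstar ->
  directed D -> finite_set G -> scott_open U -> U !=set0 ->
  (\bigcap_(d in D) upset [set d]) `&` upset G `<=` U ->
  exists2 d, D d & upset [set d] `&` upset G `<=` U.
Proof.
move=> ds dD Gfin oU U0 capGU; have [s Gs] := (finite_seqP G).1 Gfin.
pose Q g d := upset [set d] `&` upset [set g] `<=` U.
have Qmono g a b : Q g a -> a <= b -> Q g b.
  by move=> aU ab z [/upset1 bz gz]; apply: aU; split=> //; exact/upset1/(le_trans ab).
have [d Dd dG] : exists2 d, D d & forall g, g \in s -> Q g d.
  apply: directed_wrt_ub_seq Qmono _ => // g gs; apply: ds => // z [zD gz].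
  by apply: capGU; split=> //; exists g; rewrite ?Gs //; exact/upset1.
exists d => // z [dz [g Gg gz]].
by apply: (dG g); [rewrite Gs in Gg | split=> //; exact/upset1].
Qed.

Lemma scott_dstar_fin_dstar : scott_dstar -> fin_dstar_condition (T := P).
Proof.
move=> ds I F G U Ffin Ffil Gfin oU U0 capGU; apply: contrapT => /forallNP noi.
pose A i := [set a | F i a /\ ~ upset [set a] `&` upset G `<=` U].
have Aup k i : upset (F k) `<=` upset (F i) -> A k `<=` upset (A i).
  move=> ki a [Fa aGU]; have [b Fb ba] := ki a (ex_intro2 _ _ a Fa (lexx a)).
  exists b => //; split=> // bGU; apply/aGU => z [/upset1 az Gz].
  by apply: bGU; split=> //; exact/upset1/(le_trans ba).
have [D [dD DA DmeetA]] : exists D : set P,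
    [/\ directed D, D `<=` \bigcup_i A i & forall i, D `&` A i !=set0].
  apply: rudin_lemma => [|i|i|i j].
  - exact: Ffil.1.
  - by apply: sub_finite_set (Ffin i).1 => a [].
  - apply: contrapT => Ai0; apply: (noi i) => y [[a Fa ay] Gy].
    apply: contrapT => nUy; apply: Ai0; exists a; split=> // aGU.
    by apply/nUy/aGU; split=> //; exact/upset1.
  - by have [k [ki kj]] := Ffil.2 i j; exists k; split; exact: Aup.
have [d Dd dGU] : exists2 d, D d & upset [set d] `&` upset G `<=` U.
  apply: scott_dstar_finite Gfin.1 _ _ _ => // z [zD Gz].
  apply: capGU; split=> // i _.
  have [a [Da [Fa _]]] := DmeetA i; exists a => //; exact/upset1/zD.
by have [i _ [_ dGnU]] := DA d Dd.
Qed.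

Lemma fin_dstar_scott_dstar : fin_dstar_condition (T := P) -> scott_dstar.
Proof.
move=> fds D x U [[d0 Dd0] dD] oU U0 capxU.
have [[d Dd] dxU] : exists d : {d | D d}, upset [set sval d] `&` upset [set x] `<=` U.
  apply: fds => // [d|||].
  - by split; [exact: finite_set1 | exists (sval d)].
  - split=> [|[a Da] [b Db]]; first exact: inhabits (exist _ d0 Dd0).
    have [c Dc [ac bc]] := dD a b Da Db.
    by exists (exist _ c Dc); split=> z /upset1 cz; apply/upset1; exact: le_trans cz.
  - by split; [exact: finite_set1 | exists x].
  - by move=> z [zD xz]; apply: capxU; split=> // d Dd; exact: (zD (exist _ d Dd)).
by exists d.
Qed.

End ScottSpace.

Theorem mainTheorem2 (disp : Order.disp_t) (P : porderType disp) :
  is_dcpo (T := P) ->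
  (dstar_space (X := scott_space P) <-> fin_dstar_condition (T := P)).
Proof.
move=> _; apply: iff_trans dstar_spaceE _.
by split; [exact: scott_dstar_fin_dstar | exact: fin_dstar_scott_dstar].
Qed.
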